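(* Let $\alpha\in(0,1)$, $\mu\in\mathbb{R}$, $\sigma\ge 0$, and let $\mathcal{P}$ be the set of all probability distributions $\mathbb{P}$ on $\mathbb{R}$ (with finite second moment) under which a real random variable $\xi$ has mean $\mathbb{E}_{\mathbb{P}}[\xi]=\mu$ and variance $\mathbb{D}_{\mathbb{P}}[\xi]=\sigma^2$. For $\Theta\in\mathbb{R}$ and $\theta^0\in\mathbb{R}$, consider the affine loss $\phi(\xi)=\Theta\xi+\theta^0$. Then the worst-case conditional value-at-risk $$\sup_{\mathbb{P}\in\mathcal{P}}\ \mathbb{P}\text{-}\mathrm{CVaR}_\alpha\big(\phi(\xi)\big)$$ equals the optimal value of the second-order cone program $$\inf_{\beta,e,q,z,s\in\mathbb{R}}\ \beta+\frac{1}{1-\alpha}(e+s)$$ subject to $$e-\theta^0+\beta+q-\Theta\mu-z>0,\qquad e\ge 0,\qquad z>0,\qquad \left\|\begin{pmatrix} q\\ \Theta\sigma\\ z-s\end{pmatrix}\right\|_2\le z+s.$$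
   Context: For a distribution $\mathbb{P}$ and an integrable random variable $X$, the conditional value-at-risk at level $\alpha\in(0,1)$ is $\mathbb{P}\text{-}\mathrm{CVaR}_\alpha(X)=\inf_{\beta\in\mathbb{R}}\big\{\beta+\frac{1}{1-\alpha}\mathbb{E}_{\mathbb{P}}[(X-\beta)^+]\big\}$, where $(x)^+=\max\{x,0\}$. $\|\cdot\|_2$ denotes the Euclidean norm on $\mathbb{R}^3$; $\beta,e,q,z,s$ are auxiliary scalar decision variables. *)

From mathcomp Require Import all_boot all_order all_algebra.
From mathcomp Require Import all_classical all_reals all_analysis.
Set Implicit Arguments. Unset Strict Implicit. Unset Printing Implicit Defensive.
Import Order.TTheory GRing.Theory Num.Theory.
Local Open Scope classical_set_scope.
Local Open Scope ring_scope.

Definition pospart (R : realType) (x : R) : R := Num.max x 0.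

Definition CVaR (R : realType) (P : probability R R) (alpha : R) (X : R -> R)
  : \bar R :=
  ereal_inf [set ((beta%:E + ((1 - alpha)^-1)%:E *
                   \int[P]_x (pospart (X x - beta))%:E))%E | beta in [set: R]].

Definition moment_set (R : realType) (mu sigma : R) : set (probability R R) :=
  [set P : probability R R |
     P.-integrable [set: R] (fun x => (x ^+ 2)%:E) /\
     (\int[P]_x x%:E = mu%:E)%E /\
     (\int[P]_x ((x - mu) ^+ 2)%:E = (sigma ^+ 2)%:E)%E].

Definition worst_case_CVaR (R : realType) (alpha mu sigma Theta theta0 : R)
  : \bar R :=
  ereal_sup [set CVaR P alpha (fun xi => Theta * xi + theta0)
            | P in moment_set mu sigma].

Definition socp_feasible (R : realType) (mu sigma Theta theta0 : R)
  (beta e q z s : R) : Prop :=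
  [/\ 0 < e - theta0 + beta + q - Theta * mu - z,
      0 <= e,
      0 < z &
      Num.sqrt (q ^+ 2 + (Theta * sigma) ^+ 2 + (z - s) ^+ 2) <= z + s].

Definition socp_value (R : realType) (alpha mu sigma Theta theta0 : R)
  : \bar R :=
  ereal_inf [set r : \bar R | exists beta e q z s : R,
               socp_feasible mu sigma Theta theta0 beta e q z s /\
               r = (beta + (1 - alpha)^-1 * (e + s))%:E].

From HB Require Import structures.
From mathcomp Require Import all_boot all_order all_algebra.
From mathcomp Require Import all_classical all_reals all_analysis.
From mathcomp Require Import measurable_realfun ring lra.
Import Order.TTheory GRing.Theory Num.Theory.
Local Open Scope ring_scope.
Local Open Scope classical_set_scope.
Set Implicit Arguments. Unset Strict Implicit.

(* Both sides equal [Theta mu + theta0 + sqrt (alpha / (1 - alpha)) |Theta| sigma].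
   A feasible point of the SOCP gives, by AM-GM, a quadratic majorant of
   [(phi xi - beta)^+] whose expectation only involves the first two moments and is
   at most [e + s]; so the worst-case CVaR is at most the SOCP value.  Conversely, a
   two-point law with mean [mu] and variance [sigma^2] and mass [1 - alpha] on
   [mu + sqrt (alpha / (1 - alpha)) sigma sign(Theta)] has CVaR at least the closed
   form, and perturbing the SOCP's optimal point into the strictly feasible region
   shows that the SOCP value is at most the closed form. *)

Ltac solve_measurable :=
  rewrite /pospart; repeat first
    [ apply: measurable_funD | apply: measurable_funB | apply: measurable_funM
    | apply: measurable_maxr | apply: measurable_funX
    | exact: measurable_cst | exact: measurable_id ].

Section TwoPointLaw.
Variable R : realType.

Definition two_point (lo hi : R) (b : bool) : R := if b then hi else lo.

Lemma measurable_two_point (lo hi : R) : measurable_fun setT (two_point lo hi).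
Proof. by move=> _ Y _; exact: I. Qed. (* every subset of [bool] is measurable *)

HB.instance Definition _ (lo hi : R) :=
  isMeasurableFun.Build _ _ _ _ (two_point lo hi) (measurable_two_point lo hi).

Definition two_point_law (p lo hi : R) := distribution (bernoulli_prob p) (two_point lo hi).

Lemma integral_two_point_law (p lo hi : R) (f : R -> R) : 0 <= p <= 1 ->
  measurable_fun setT f ->
  (\int[two_point_law p lo hi]_x (f x)%:E = (p * f hi + (1 - p) * f lo)%:E)%E.
Proof.
move=> p01 mf.
have mfe : measurable_fun [set: R] (fun x => (f x)%:E) by exact/measurable_EFinP.
rewrite integralE /two_point_law /distribution.
rewrite !ge0_integral_pushforward //; last 2 first.
- exact: measurable_funeneg.
- exact: measurable_funepos.
rewrite preimage_setT !integral_bernoulli_prob //; last 2 first.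
- by move=> ?; exact: funeneg_ge0.
- by move=> ?; exact: funepos_ge0.
rewrite /= !funeposE !funenegE /= -!EFin_max -!EFinM -!EFinD.
congr EFin; rewrite /unstable.onem.
have max_subN (a : R) : Num.max a 0 - Num.max (- a) 0 = a.
  by rewrite !maxr_absE !subr0 normrN; lra.
by rewrite -[in RHS](max_subN (f hi)) -[in RHS](max_subN (f lo)); ring.
Qed.

Lemma two_point_law_moment_set (mu sigma p a : R) : 0 <= p <= 1 ->
  a ^+ 2 * (p * (1 - p)) = sigma ^+ 2 ->
  moment_set mu sigma (two_point_law p (mu - a * p) (mu + a * (1 - p))).
Proof.
move=> p01 var_a; split; [|split].
- apply/integrableP; split; first by apply/measurable_EFinP; solve_measurable.
  under eq_integral do rewrite abse_EFin (ger0_norm (sqr_ge0 _)).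
  by rewrite integral_two_point_law // ltry.
- by rewrite integral_two_point_law //; congr EFin; ring.
- rewrite integral_two_point_law //; last by solve_measurable.
  by rewrite -var_a; congr EFin; ring.
Qed.

(* The atom [hi] carries exactly the tail mass [1 - alpha], so every [beta] in the
   CVaR formula pays at least [(f hi - beta)^+]. *)
Lemma CVaR_two_point_law_ge (alpha lo hi : R) (f : R -> R) : 0 < alpha < 1 ->
  measurable_fun setT f ->
  ((f hi)%:E <= CVaR (two_point_law (1 - alpha) lo hi) alpha f)%E.
Proof.
move=> /andP[a0 a1] mf; apply/ereal_infP => _ [b _ <-].
rewrite integral_two_point_law; last 2 first.
- by apply/andP; split; lra.
- by solve_measurable.
rewrite -EFinM -EFinD lee_fin.
have an : 1 - alpha != 0 by rewrite subr_eq0 gt_eqF.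
have -> : (1 - alpha)^-1 * ((1 - alpha) * pospart (f hi - b) +
    (1 - (1 - alpha)) * pospart (f lo - b)) =
    pospart (f hi - b) + alpha / (1 - alpha) * pospart (f lo - b) by field.
have hi_le : f hi - b <= pospart (f hi - b) by rewrite /pospart le_max lexx.
have lo_ge0 : 0 <= alpha / (1 - alpha) * pospart (f lo - b).
  by rewrite mulr_ge0 ?divr_ge0 ?le_max ?lexx ?orbT //; lra.
lra.
Qed.

End TwoPointLaw.

Section MomentSet.
Variables (R : realType) (mu sigma : R) (P : probability R R).
Hypothesis P_moments : moment_set mu sigma P.

Lemma moment_set_integrable_id : P.-integrable setT (fun x => x%:E).
Proof.
have [sqr_integrable _] := P_moments.
apply: (le_integrable _ _ _ (integrableD measurableT sqr_integrable
   (finite_measure_integrable_cst P 1 measurableT))) => //.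
  by apply/measurable_EFinP; exact: measurable_id.
move=> x _ /=; rewrite lee_fin [X in _ <= X]ger0_norm; last by have := sqr_ge0 x; lra.
have := real_normK (num_real x); have := normr_ge0 x; have := sqr_ge0 (`|x| - 1).
nra.
Qed.

Lemma moment_set_integral_quadratic (a b c : R) :
  (\int[P]_x (a + b * (x - mu) + c * (x - mu) ^+ 2)%:E = (a + c * sigma ^+ 2)%:E)%E.
Proof.
have [_ [mean var]] := P_moments.
have sqr_integrable : P.-integrable setT (fun x => ((x - mu) ^+ 2)%:E).
  apply/integrableP; split; first by apply/measurable_EFinP; solve_measurable.
  under eq_integral do rewrite abse_EFin (ger0_norm (sqr_ge0 _)).
  by rewrite var ltry.
have cst_integrable := finite_measure_integrable_cst P _ measurableT.
have id_integrable := moment_set_integrable_id.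
transitivity (\int[P]_x ((a - b * mu)%:E + (b%:E * x%:E + c%:E * ((x - mu) ^+ 2)%:E)))%E.
  by apply: eq_integral => x _; rewrite -!EFinM -!EFinD; congr EFin; ring.
rewrite integralD //; last 2 first.
- exact: cst_integrable.
- by apply: integrableD => //; exact: integrableZl.
rewrite integralD //; [|exact: integrableZl..].
rewrite !integralZl // mean var integral_cst // [X in (_ * X)%E]probability_setT.
by rewrite mule1 -!EFinM -!EFinD; congr EFin; ring.
Qed.

End MomentSet.

Lemma subr_le_sqr_div (R : realFieldType) (z w : R) : 0 < z -> w - z <= w ^+ 2 / (4 * z).
Proof.
move=> z_gt0; have z_neq0 : z != 0 by rewrite gt_eqF.
have -> : w ^+ 2 / (4 * z) = (w - z) + (w - 2 * z) ^+ 2 / (4 * z) by field.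
by rewrite lerDl divr_ge0 ?sqr_ge0 //; lra.
Qed.

Lemma sqrt_rotated_cone_le (R : rcfType) (a z s : R) : 0 <= a ->
  (Num.sqrt (a + (z - s) ^+ 2) <= z + s) = (a <= 4 * z * s) && (0 <= z + s).
Proof.
move=> a_ge0; have [zs_ge0|zs_lt0] := leP 0 (z + s).
  rewrite andbT -[in LHS](ger0_norm zs_ge0) -sqrtr_sqr ler_sqrt ?sqr_ge0 //.
  apply/idP/idP; nra.
by rewrite andbF; apply: negbTE; rewrite -ltNge (lt_le_trans zs_lt0) ?sqrtr_ge0.
Qed.

Definition affine_CVaR_closed_form (R : realType) (alpha mu sigma Theta theta0 : R) : R :=
  Theta * mu + theta0 + Num.sqrt (alpha / (1 - alpha)) * (`|Theta| * sigma).

Section AffineLoss.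
Variables (R : realType) (alpha mu sigma Theta theta0 : R).
Hypothesis alpha01 : 0 < alpha < 1.

Let phi (xi : R) := Theta * xi + theta0.

Lemma CVaR_affine_le_socp_objective (P : probability R R) (beta e q z s : R) :
  moment_set mu sigma P -> socp_feasible mu sigma Theta theta0 beta e q z s ->
  (CVaR P alpha phi <= (beta + (1 - alpha)^-1 * (e + s))%:E)%E.
Proof.
move=> P_moments [margin e_ge0 z_gt0 cone].
have [a0 a1] := andP alpha01; have z_neq0 : z != 0 by rewrite gt_eqF.
have qT_le : q ^+ 2 + (Theta * sigma) ^+ 2 <= 4 * z * s.
  have qT_ge0 : 0 <= q ^+ 2 + (Theta * sigma) ^+ 2 by rewrite addr_ge0 ?sqr_ge0.
  by move: cone; rewrite sqrt_rotated_cone_le // => /andP[].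
pose a := e + q ^+ 2 / (4 * z).
pose b := q * Theta / (2 * z).
pose c := Theta ^+ 2 / (4 * z).
(* With [w = Theta (x - mu) + q], the margin constraint gives [phi x - beta <= e + w - z],
   and AM-GM gives [w - z <= w^2 / (4 z)]. *)
have majorant x : pospart (phi x - beta) <= a + b * (x - mu) + c * (x - mu) ^+ 2.
  have -> : a + b * (x - mu) + c * (x - mu) ^+ 2 =
      e + (Theta * (x - mu) + q) ^+ 2 / (4 * z) by rewrite /a /b /c; field.
  have := subr_le_sqr_div (Theta * (x - mu) + q) z_gt0.
  have : 0 <= (Theta * (x - mu) + q) ^+ 2 / (4 * z) by rewrite divr_ge0 ?sqr_ge0 //; lra.
  by rewrite /pospart /phi ge_max; move=> *; apply/andP; split; lra.
apply: le_trans (ereal_inf_lbound _) _; first by exists beta.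
rewrite EFinD EFinM leeD2l //; apply: lee_wpmul2l; first by rewrite lee_fin invr_ge0; lra.
apply: (@le_trans _ _
  (\int[P]_x (a + b * (x - mu) + c * (x - mu) ^+ 2)%:E)%E).
  apply: ge0_le_integral => //.
  - by move=> x _; rewrite lee_fin /pospart le_max lexx orbT.
  - by apply/measurable_EFinP; rewrite /phi; solve_measurable.
  - by apply/measurable_EFinP; solve_measurable.
  - by move=> x _; rewrite lee_fin majorant.
rewrite (moment_set_integral_quadratic P_moments) lee_fin /a /c.
have -> : e + q ^+ 2 / (4 * z) + Theta ^+ 2 / (4 * z) * sigma ^+ 2 =
  e + (q ^+ 2 + (Theta * sigma) ^+ 2) / (4 * z) by field.
by rewrite lerD2l ler_pdivrMr; [nra | lra].
Qed.

Lemma worst_case_CVaR_le_socp_value :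
  (worst_case_CVaR alpha mu sigma Theta theta0 <= socp_value alpha mu sigma Theta theta0)%E.
Proof.
apply/ereal_supP => _ [P P_moments <-].
apply/ereal_infP => _ [beta [e [q [z [s [feasible ->]]]]]].
exact: (CVaR_affine_le_socp_objective P_moments feasible).
Qed.

Let k := Num.sqrt (alpha / (1 - alpha)).

Let k_gt0 : 0 < k.
Proof. by have [a0 a1] := andP alpha01; rewrite /k sqrtr_gt0 divr_gt0 //; lra. Qed.

Let k_sqr : k ^+ 2 * (1 - alpha) = alpha.
Proof.
have [a0 a1] := andP alpha01; have an : 1 - alpha != 0 by rewrite subr_eq0 gt_eqF.
by rewrite /k sqr_sqrtr ?divfK // divr_ge0 //; lra.
Qed.

Let inv_onem : (1 - alpha)^-1 = 1 + k ^+ 2.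
Proof.
have [a0 a1] := andP alpha01; have an : 1 - alpha != 0 by rewrite subr_eq0 gt_eqF.
by apply: (mulIf an); rewrite mulVf // mulrDl k_sqr; ring.
Qed.

Lemma affine_CVaR_closed_form_le_worst_case_CVaR :
  ((affine_CVaR_closed_form alpha mu sigma Theta theta0)%:E <=
   worst_case_CVaR alpha mu sigma Theta theta0)%E.
Proof.
have [a0 a1] := andP alpha01; have a_neq0 : alpha != 0 by rewrite gt_eqF.
(* [a] has the sign of [Theta], so the heavy atom [hi] lies where [phi] is large. *)
pose a := (-1) ^+ (Theta < 0)%R * (sigma * k / alpha).
pose hi := mu + a * (1 - (1 - alpha)).
have -> : affine_CVaR_closed_form alpha mu sigma Theta theta0 = phi hi.
  by rewrite /affine_CVaR_closed_form normrEsign /phi /hi /a -/k; field.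
apply: (le_trans (CVaR_two_point_law_ge _ _ alpha01 _)).
  by rewrite /phi; solve_measurable.
apply: ereal_sup_ubound; exists (two_point_law (1 - alpha) (mu - a * (1 - alpha)) hi) => //.
apply: two_point_law_moment_set; first by apply/andP; split; lra.
rewrite exprMn sqrr_sign mul1r.
transitivity (sigma ^+ 2 * (k ^+ 2 * (1 - alpha)) / alpha); first by field.
by rewrite k_sqr mulfK.
Qed.

Section SocpWitness.
Hypothesis sigma_ge0 : 0 <= sigma.

(* For [delta = 0] this is the optimal point of the SOCP: [r = sqrt (d^2 + tau^2)] is
   the best [z] for a given [d], and [d] minimizes [- d + (r + d) / (2 (1 - alpha))].
   Taking [delta > 0] makes [z > 0] and the margin constraint strict. *)
Lemma socp_feasible_near_closed_form (delta : R) : 0 < delta ->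
  exists beta e q z s, socp_feasible mu sigma Theta theta0 beta e q z s /\
    beta + (1 - alpha)^-1 * (e + s) =
    affine_CVaR_closed_form alpha mu sigma Theta theta0 + (1 - alpha)^-1 * (5 / 4 * delta).
Proof.
move=> delta_gt0; have k_neq0 : k != 0 by rewrite gt_eqF.
pose tau := `|Theta| * sigma.
have tau_ge0 : 0 <= tau by rewrite mulr_ge0.
pose r := tau * (k^-1 + k) / 2.
pose d := tau * (k^-1 - k) / 2.
have kinv_gt0 : 0 < k^-1 by rewrite invr_gt0.
have r_ge0 : 0 <= r.
  by rewrite /r; apply: divr_ge0 => //; apply: mulr_ge0 => //; apply: addr_ge0; exact: ltW.
have rd_ge0 : 0 <= r + d.
  have -> : r + d = tau / k by rewrite /r /d; field.
  by apply: divr_ge0 => //; exact: ltW.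
have r2_d2 : r ^+ 2 = d ^+ 2 + tau ^+ 2 by rewrite /r /d; field.
have Ttau : (Theta * sigma) ^+ 2 = tau ^+ 2 by rewrite /tau !exprMn real_normK ?num_real.
pose z := r + delta.
pose s := (r + d) / 2 + delta / 4.
exists (Theta * mu + theta0 - d), delta, (z + d), z, s; split.
  split.
  - by rewrite /z; lra.
  - exact: ltW.
  - by rewrite /z; lra.
  - have cone_ge0 : 0 <= (z + d) ^+ 2 + tau ^+ 2 by rewrite addr_ge0 ?sqr_ge0.
    rewrite Ttau sqrt_rotated_cone_le //.
    by apply/andP; split; rewrite /z /s; nra.
rewrite inv_onem /affine_CVaR_closed_form -/k -/tau /s.
have -> : r + d = tau / k by rewrite /r /d; field.
by rewrite /d; field.
Qed.

Lemma socp_value_le_affine_CVaR_closed_form :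
  (socp_value alpha mu sigma Theta theta0 <=
   (affine_CVaR_closed_form alpha mu sigma Theta theta0)%:E)%E.
Proof.
have [a0 a1] := andP alpha01; have an : 1 - alpha != 0 by rewrite subr_eq0 gt_eqF.
apply/lee_addgt0Pr => eps eps_gt0.
have delta_gt0 : 0 < eps * (1 - alpha) / 2 by rewrite divr_gt0 ?mulr_gt0 //; lra.
have [beta [e [q [z [s [feasible objective]]]]]] :=
  socp_feasible_near_closed_form delta_gt0.
apply: le_trans (ereal_inf_lbound _) _; first by exists beta, e, q, z, s.
rewrite objective -EFinD lee_fin lerD2l.
have -> : (1 - alpha)^-1 * (5 / 4 * (eps * (1 - alpha) / 2)) = 5 / 8 * eps by field.
lra.
Qed.

End SocpWitness.

End AffineLoss.

Theorem lemma1 (R : realType) (alpha mu sigma Theta theta0 : R) :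
  0 < alpha < 1 -> 0 <= sigma ->
  worst_case_CVaR alpha mu sigma Theta theta0 =
  socp_value alpha mu sigma Theta theta0.
Proof.
move=> alpha01 sigma_ge0; apply/le_anti/andP; split.
  exact: worst_case_CVaR_le_socp_value.
apply: le_trans (socp_value_le_affine_CVaR_closed_form mu Theta theta0 alpha01 sigma_ge0) _.
exact: affine_CVaR_closed_form_le_worst_case_CVaR.
Qed.
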